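(* For every positive integer $m$ such that the shell $(\mathbb{Z}^2)_m=\{x\in\mathbb{Z}^2 : (x,x)=m\}$ is nonempty, the shell $(\mathbb{Z}^2)_m$ is not a spherical $4$-design.
   Context: $(x,y)$ denotes the standard Euclidean inner product on $\mathbb{R}^2$. A finite nonempty set $X\subset S^{n-1}=\{x\in\mathbb{R}^n: x_1^2+\cdots+x_n^2=1\}$ is a spherical $t$-design if $\frac{1}{|X|}\sum_{x\in X}f(x)=\frac{1}{|S^{n-1}|}\int_{S^{n-1}}f(x)\,d\sigma(x)$ for all polynomials $f$ of degree at most $t$; a finite nonempty subset $X$ of the sphere $S^{n-1}(r)$ of radius $r$ is a spherical $t$-design if $\frac{1}{r}X$ is one. (For $n=2$, identifying $\mathbb{R}^2$ with $\mathbb{C}$, a finite set $\{\xi_1,\dots,\xi_N\}$ on the unit circle is a spherical $t$-design iff $\sum_i \xi_i^k=0$ for all $k=1,\dots,t$.) *)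

From Stdlib Require Import Reals Lra Lia ZArith List.
From Coquelicot Require Import Coquelicot.
Import ListNotations.
Open Scope R_scope.

Definition poly2_deg_le (t : nat) (f : R -> R -> R) : Prop :=
  exists l : list (R * nat * nat),
    List.Forall (fun m => (snd (fst m) + snd m <= t)%nat) l /\
    forall x y : R,
      f x y = fold_right
                (fun m acc => fst (fst m) * x ^ (snd (fst m)) * y ^ (snd m) + acc)
                0 l.

Definition circle_avg (f : R -> R -> R) : R :=
  RInt (fun th => f (cos th) (sin th)) 0 (2 * PI) / (2 * PI).

Definition list_avg (f : R -> R -> R) (X : list (R * R)) : R :=
  fold_right (fun p acc => f (fst p) (snd p) + acc) 0 X / INR (length X).

Definition is_spherical_design_S1 (t : nat) (X : list (R * R)) : Prop :=
  X <> [] /\ NoDup X /\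
  List.Forall (fun p => fst p ^ 2 + snd p ^ 2 = 1) X /\
  forall f, poly2_deg_le t f -> list_avg f X = circle_avg f.

Definition is_spherical_design_r (t : nat) (r : R) (X : list (R * R)) : Prop :=
  is_spherical_design_S1 t (map (fun p => (fst p / r, snd p / r)) X).

Definition zrange (m : nat) : list Z :=
  map (fun k => (Z.of_nat k - Z.of_nat m)%Z) (seq 0 (2 * m + 1)).

Definition shell (m : nat) : list (Z * Z) :=
  filter (fun p => Z.eqb (fst p * fst p + snd p * snd p) (Z.of_nat m))
         (list_prod (zrange m) (zrange m)).

Definition shell_R (m : nat) : list (R * R) :=
  map (fun p => (IZR (fst p), IZR (snd p))) (shell m).

(* On the unit circle [x^4 - 6x^2y^2 + y^4 = cos 4t] has average 0, so if the shell of
   norm m were a 4-design, the sum c(m) of Re((x + iy)^4) over its points would vanish.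
   Up to a factor 4, c is the coefficient sequence of a Hecke eigenform, and Gaussian
   factorization gives its recursions: c(2k) = -4 c(k); c(p^2 k) = p^4 c(k) for a prime
   p that is not a sum of two squares (such a p divides both coordinates); and for a
   split odd prime p = a^2 + b^2, c(p^(e+2) n) = 2 Re((a+bi)^4) c(p^(e+1) n) - p^4 c(p^e n),
   whose multipliers are never divisible by p. Since c(1) = 4, induction on m shows
   that c(m) never vanishes on a nonempty shell. *)

From Stdlib Require Import Reals ZArith List.
From Stdlib Require Import Znumtheory Lia Lra Permutation Bool Classical.
From Coquelicot Require Import Coquelicot.
Import ListNotations.

Open Scope Z_scope.

Definition zsum {T} (f : T -> Z) (l : list T) : Z :=
  fold_right (fun z acc => f z + acc) 0 l.

Section ListSums.
Context {T : Type}.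
Implicit Types (f g : T -> Z) (l : list T).

Lemma zsum_perm f l1 l2 : Permutation l1 l2 -> zsum f l1 = zsum f l2.
Proof. induction 1; simpl; lia. Qed.

Lemma zsum_same_elements f l1 l2 : NoDup l1 -> NoDup l2 ->
  (forall z, In z l1 <-> In z l2) -> zsum f l1 = zsum f l2.
Proof. intros; apply zsum_perm, NoDup_Permutation; auto. Qed.

Lemma zsum_filter f (P : T -> bool) l :
  zsum f l = zsum f (filter P l) + zsum f (filter (fun z => negb (P z)) l).
Proof. induction l as [|a l IH]; simpl; [lia|]. destruct (P a); simpl; lia. Qed.

Lemma zsum_map {S} f (h : S -> T) (l : list S) :
  zsum f (map h l) = zsum (fun z => f (h z)) l.
Proof. induction l; simpl; lia. Qed.

Lemma zsum_ext_in f g l : (forall z, In z l -> f z = g z) -> zsum f l = zsum g l.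
Proof.
  induction l as [|a l IH]; simpl; intros H; [lia|].
  rewrite H, IH by auto. lia.
Qed.

Lemma zsum_scale c f l : zsum (fun z => c * f z) l = c * zsum f l.
Proof. induction l; simpl; lia. Qed.

Lemma zsum_add f g l : zsum (fun z => f z + g z) l = zsum f l + zsum g l.
Proof. induction l; simpl; lia. Qed.

Lemma zsum_cover f (P : T -> bool) L A B : NoDup L -> NoDup A -> NoDup B ->
  (forall z, In z A <-> In z L /\ P z = true) ->
  (forall z, In z B -> In z L) ->
  (forall z, In z L -> P z = false -> In z B) ->
  zsum f L = zsum f A + zsum f B - zsum f (filter P B).
Proof.
  intros HL HA HB Hin_A Hsub_B Hcov.
  rewrite (zsum_filter f P L), (zsum_filter f P B).
  rewrite (zsum_same_elements f (filter P L) A) by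
    (try apply NoDup_filter; auto; intros z; rewrite filter_In, Hin_A; tauto).
  rewrite (zsum_same_elements f (filter (fun z => negb (P z)) L)
                              (filter (fun z => negb (P z)) B)); [lia| | |].
  1,2: apply NoDup_filter; auto.
  intros z; rewrite !filter_In, negb_true_iff; intuition.
Qed.

End ListSums.

Lemma NoDup_list_prod {A B} (l1 : list A) (l2 : list B) :
  NoDup l1 -> NoDup l2 -> NoDup (list_prod l1 l2).
Proof.
  induction 1 as [|a l1 Ha H1 IH]; intros H2; simpl; [constructor|].
  apply NoDup_app.
  - apply NoDup_map_NoDup_ForallPairs; auto.
    intros x y _ _ E; now inversion E.
  - now apply IH.
  - intros [x y] Hin Hin2. apply in_map_iff in Hin as [y' [E _]].
    inversion E; subst. apply in_prod_iff in Hin2 as [Hx _]. contradiction.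
Qed.

(** * Gaussian-integer shells *)

Lemma zrange_NoDup m : NoDup (zrange m).
Proof.
  apply NoDup_map_NoDup_ForallPairs; [|apply seq_NoDup].
  intros x y _ _ E; lia.
Qed.

Lemma in_zrange m x : In x (zrange m) <-> - Z.of_nat m <= x <= Z.of_nat m.
Proof.
  unfold zrange. rewrite in_map_iff. split.
  - intros [k [E Hk]]. apply in_seq in Hk. lia.
  - intros H. exists (Z.to_nat (x + Z.of_nat m)). split; [lia|].
    apply in_seq. lia.
Qed.

Definition zshell (n : Z) : list (Z * Z) := shell (Z.to_nat n).

Definition norm2 (z : Z * Z) : Z := fst z * fst z + snd z * snd z.

Definition is_sum2sq (n : Z) : Prop := exists x y, x * x + y * y = n.

Lemma zshell_NoDup n : NoDup (zshell n).
Proof. apply NoDup_filter, NoDup_list_prod; apply zrange_NoDup. Qed.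

Lemma in_zshell n z : 0 <= n -> In z (zshell n) <-> norm2 z = n.
Proof.
  intros Hn. destruct z as [x y].
  unfold zshell, shell, norm2. rewrite filter_In, in_prod_iff, !in_zrange.
  simpl. rewrite Z.eqb_eq, Z2Nat.id by lia. split; [tauto|].
  intros H; repeat split; nia.
Qed.

(* [re4 z] and [im4 z] are the real and imaginary parts of [z ^ 4]. *)
Definition re4 (z : Z * Z) : Z :=
  let (x, y) := z in x ^ 4 - 6 * x ^ 2 * y ^ 2 + y ^ 4.

Definition im4 (z : Z * Z) : Z :=
  let (x, y) := z in 4 * x * y * (x ^ 2 - y ^ 2).

Definition shell_re4 (n : Z) : Z := zsum re4 (zshell n).

Lemma shell_re4_1 : shell_re4 1 = 4.
Proof. vm_compute. reflexivity. Qed.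

Definition gmul (g z : Z * Z) : Z * Z :=
  let (a, b) := g in let (u, v) := z in (a * u - b * v, a * v + b * u).

Definition gconj (g : Z * Z) : Z * Z := (fst g, - snd g).

Lemma re4_gmul g w : re4 (gmul g w) = re4 g * re4 w - im4 g * im4 w.
Proof. destruct g, w; cbv [re4 im4 gmul]; ring. Qed.

Lemma re4_gmul_add_conj g w :
  re4 (gmul g w) + re4 (gmul (gconj g) w) = 2 * re4 g * re4 w.
Proof. destruct g, w; cbv [re4 gmul gconj fst snd]; ring. Qed.

(* [gdvdb g z] decides whether [g] divides [z], i.e. whether [z * conj g / norm2 g]
   is a Gaussian integer. *)
Definition gdvdb (g z : Z * Z) : bool :=
  let (a, b) := g in let (x, y) := z in
  ((x * a + y * b) mod norm2 g =? 0) && ((y * a - x * b) mod norm2 g =? 0).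

Lemma gdvdbP a b x y : 0 < norm2 (a, b) ->
  gdvdb (a, b) (x, y) = true <->
  (norm2 (a, b) | x * a + y * b) /\ (norm2 (a, b) | y * a - x * b).
Proof.
  intros Hq. simpl gdvdb.
  rewrite andb_true_iff, !Z.eqb_eq, <- !Z.mod_divide by lia. tauto.
Qed.

Lemma gmul_inj g : 0 < norm2 g -> forall w w', gmul g w = gmul g w' -> w = w'.
Proof.
  destruct g as [a b]; unfold norm2; simpl fst; simpl snd.
  intros Hq [u v] [u' v'] E. simpl in E. inversion E as [[E1 E2]].
  assert (a * (a*u - b*v) + b * (a*v+b*u) = a * (a*u' - b*v') + b * (a*v'+b*u'))
    by (rewrite E1, E2; ring).
  assert (a * (a*v + b*u) - b * (a*u-b*v) = a * (a*v' + b*u') - b * (a*u'-b*v'))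
    by (rewrite E1, E2; ring).
  f_equal; apply (Z.mul_reg_l _ _ (a*a+b*b)); nia.
Qed.

Lemma gmul_zshell_NoDup g k : 0 < norm2 g -> NoDup (map (gmul g) (zshell k)).
Proof.
  intros Hq. apply NoDup_map_NoDup_ForallPairs; [|apply zshell_NoDup].
  intros w w' _ _. apply gmul_inj; auto.
Qed.

Lemma in_gmul_zshell g k z : 0 < norm2 g -> 0 <= k ->
  In z (map (gmul g) (zshell k)) <-> norm2 z = norm2 g * k /\ gdvdb g z = true.
Proof.
  destruct g as [a b], z as [x y]. intros Hq Hk.
  rewrite in_map_iff, gdvdbP by auto. unfold norm2 in *; simpl fst in *; simpl snd in *.
  set (q := a*a+b*b) in *. split.
  - intros [[u v] [E Hin]]. apply in_zshell in Hin; auto. unfold norm2 in Hin.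
    simpl in E, Hin. inversion E; subst x y. split; [subst q; nia|].
    split; [exists u|exists v]; subst q; ring.
  - intros [HN [[u Hu] [v Hv]]]. exists (u, v). split.
    + simpl. f_equal; apply (Z.mul_reg_l _ _ q); try lia; subst q.
      * transitivity (a * (u * (a*a+b*b)) - b * (v * (a*a+b*b))); [ring|].
        rewrite <- Hu, <- Hv. ring.
      * transitivity (a * (v * (a*a+b*b)) + b * (u * (a*a+b*b))); [ring|].
        rewrite <- Hu, <- Hv. ring.
    + apply in_zshell; auto. unfold norm2; simpl.
      apply (Z.mul_reg_l _ _ (q*q)); [nia|].
      assert (E : (x*a+y*b)*(x*a+y*b) + (y*a-x*b)*(y*a-x*b) = (x*x+y*y)*q)
        by (subst q; ring).
      rewrite Hu, Hv, HN in E. nia.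
Qed.

Lemma is_sum2sq_gdvd g k z : 0 < norm2 g -> 0 <= k ->
  norm2 z = norm2 g * k -> gdvdb g z = true -> is_sum2sq k.
Proof.
  intros Hq Hk HN Hd.
  assert (Hin : In z (map (gmul g) (zshell k))) by (apply in_gmul_zshell; auto).
  apply in_map_iff in Hin as [[u v] [_ Hin]]. apply in_zshell in Hin; auto.
  now exists u, v.
Qed.

Lemma shell_re4_gmul g k : 0 < norm2 g -> 0 <= k -> im4 g = 0 ->
  (forall z, norm2 z = norm2 g * k -> gdvdb g z = true) ->
  shell_re4 (norm2 g * k) = re4 g * shell_re4 k.
Proof.
  intros Hq Hk Him Hd. unfold shell_re4.
  rewrite (zsum_same_elements re4 (zshell _) (map (gmul g) (zshell k))).
  - rewrite zsum_map, <- zsum_scale. apply zsum_ext_in.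
    intros w _. rewrite re4_gmul, Him. ring.
  - apply zshell_NoDup.
  - apply gmul_zshell_NoDup; auto.
  - intros z. rewrite in_gmul_zshell, in_zshell by nia. intuition.
Qed.

Lemma gdvdb_scalar p x y : 0 < p -> gdvdb (p, 0) (x, y) = true <-> (p | x) /\ (p | y).
Proof.
  intros Hp. rewrite gdvdbP by (unfold norm2; simpl; nia). unfold norm2; simpl.
  replace (x * p + y * 0) with (x * p) by ring.
  replace (y * p - x * 0) with (y * p) by ring.
  assert (E : forall u, (p * p + 0 * 0 | u * p) <-> (p | u)).
  { intros u; split.
    - intros [c Hc]. exists c. apply (Z.mul_reg_r _ _ p); lia.
    - intros [c Hc]. exists c. subst; ring. }
  now rewrite !E.
Qed.

Lemma odd_prime_not_dvd_2 p : prime p -> p <> 2 -> ~ (p | 2).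
Proof.
  intros Hp Hp2 H. apply prime_ge_2 in Hp. apply Z.divide_pos_le in H; lia.
Qed.

Lemma prime_dvd_cancel p c x : prime p -> ~ (p | c) -> (p | c * x) -> (p | x).
Proof. intros Hp Hc H. apply prime_mult in H; tauto. Qed.

(** * Primes that split in the Gaussian integers *)

Section SplitPrime.
Variables p a b : Z.
Hypothesis Hp : prime p.
Hypothesis Hp2 : p <> 2.
Hypothesis Hab : norm2 (a, b) = p.

Let p_gt1 : 1 < p.
Proof. apply prime_ge_2 in Hp; lia. Qed.

Let norm2_conj : norm2 (a, - b) = p.
Proof. rewrite <- Hab; unfold norm2; simpl; ring. Qed.

Lemma split_not_dvd_a : ~ (p | a).
Proof.
  unfold norm2 in Hab; simpl in Hab.
  intros [c Hc]. subst a.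
  assert (Hb : (p | b)).
  { assert (Hbb : (p | b * b)).
    { exists (1 - c * c * p).
      replace (b * b) with (p - c * p * (c * p)) by lia. ring. }
    apply prime_mult in Hbb; tauto. }
  destruct Hb as [d Hd]. subst b.
  assert (E : p * (p * (c * c + d * d)) = p * 1).
  { transitivity (c * p * (c * p) + d * p * (d * p)); [ring | lia]. }
  apply Z.mul_reg_l, Z.eq_mul_1_nonneg in E; lia.
Qed.

(* A point of norm [p k] is divisible by [a + bi] or by its conjugate, since [p]
   divides [(xa + yb)(xa - yb)]. *)
Lemma split_gdvd_cases x y k : norm2 (x, y) = p * k ->
  gdvdb (a, b) (x, y) = true \/ gdvdb (a, - b) (x, y) = true.
Proof.
  intros HN. rewrite !gdvdbP, norm2_conj, Hab by lia.
  unfold norm2 in HN, Hab; simpl in HN, Hab.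
  assert (Hd : (p | (x*a+y*b) * (x*a-y*b))).
  { exists (a*a*k - y*y). transitivity (a*a*(x*x+y*y) - y*y*(a*a+b*b)); [ring|].
    rewrite HN, Hab. ring. }
  pose proof split_not_dvd_a as Ha.
  apply prime_mult in Hd; auto. destruct Hd as [[c Hc]|[c Hc]].
  - left. split; [now exists c|]. apply (prime_dvd_cancel p a); auto.
    exists (y - b*c). transitivity (y*(a*a+b*b) - b*(x*a+y*b)); [ring|].
    rewrite Hc, Hab. ring.
  - right. split; [exists c; rewrite <- Hc; ring|].
    apply (prime_dvd_cancel p a); auto.
    exists (y + b*c). transitivity (y*(a*a+b*b) + b*(x*a-y*b)); [ring|].
    rewrite Hc, Hab. ring.
Qed.

Lemma split_gdvd_both x y :
  gdvdb (a, b) (x, y) = true /\ gdvdb (a, - b) (x, y) = true <-> (p | x) /\ (p | y).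
Proof.
  rewrite !gdvdbP, norm2_conj, Hab by lia.
  unfold norm2 in Hab; simpl in Hab.
  pose proof split_not_dvd_a as Ha. pose proof (odd_prime_not_dvd_2 p Hp Hp2) as H2.
  split.
  - intros [[H1 H2'] [H3 H4]]. split.
    + apply (prime_dvd_cancel p 2); auto. apply (prime_dvd_cancel p a); auto.
      replace (a * (2 * x)) with ((x*a+y*b) + (x*a + y * -b)) by ring.
      now apply Z.divide_add_r.
    + apply (prime_dvd_cancel p 2); auto. apply (prime_dvd_cancel p a); auto.
      replace (a * (2 * y)) with ((y*a-x*b) + (y*a - x * -b)) by ring.
      now apply Z.divide_add_r.
  - intros [[c Hc] [d Hd]]; subst x y.
    repeat split; [exists (c*a+d*b)|exists (d*a-c*b)|exists (c*a-d*b)|exists (d*a+c*b)];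
      ring.
Qed.

Lemma filter_gdvd_conj_shell k : 0 <= k ->
  zsum re4 (filter (gdvdb (a, b)) (map (gmul (a, - b)) (zshell k))) =
  if k mod p =? 0 then p ^ 4 * shell_re4 (k / p) else 0.
Proof.
  intros Hk. destruct (Z.eqb_spec (k mod p) 0) as [Hm|Hm].
  - apply Z.mod_divide in Hm; [|lia]. destruct Hm as [k' ->].
    assert (Hk' : 0 <= k') by nia. rewrite Z.div_mul by lia.
    replace (p ^ 4) with (re4 (p, 0)) by (cbv [re4]; ring).
    transitivity (zsum re4 (map (gmul (p, 0)) (zshell k'))).
    + apply zsum_same_elements.
      * apply NoDup_filter, gmul_zshell_NoDup. lia.
      * apply gmul_zshell_NoDup. unfold norm2; simpl; nia.
      * intros [x y].
        rewrite filter_In, !in_gmul_zshell, norm2_conj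
          by (rewrite ?norm2_conj; unfold norm2; simpl; nia).
        rewrite gdvdb_scalar, <- split_gdvd_both by lia.
        unfold norm2; simpl. split; intros; intuition lia.
    + unfold shell_re4. rewrite zsum_map, <- zsum_scale. apply zsum_ext_in.
      intros w _. rewrite re4_gmul. cbv [im4]. ring.
  - destruct (filter _ _) as [|[x y] l] eqn:El; [reflexivity|]. exfalso.
    assert (Hz : In (x, y) (filter (gdvdb (a, b)) (map (gmul (a, - b)) (zshell k))))
      by (rewrite El; now left).
    rewrite filter_In, in_gmul_zshell, norm2_conj in Hz by lia.
    destruct Hz as [[HN H1] H2].
    destruct (proj1 (split_gdvd_both x y) (conj H2 H1)) as [[c Hc] [d Hd]].
    subst x y. apply Hm, Z.mod_divide; [lia|].
    exists (c * c + d * d). apply (Z.mul_reg_l _ _ p); [lia|].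
    unfold norm2 in HN; simpl in HN. lia.
Qed.
Lemma shell_re4_split k : 0 <= k ->
  shell_re4 (p * k) = 2 * re4 (a, b) * shell_re4 k
                      - (if k mod p =? 0 then p ^ 4 * shell_re4 (k / p) else 0).
Proof.
  intros Hk. assert (Hq : 0 < norm2 (a, b)) by lia.
  assert (Hq' : 0 < norm2 (a, - b)) by lia.
  unfold shell_re4 at 1.
  rewrite (zsum_cover re4 (gdvdb (a, b)) (zshell (p * k))
             (map (gmul (a, b)) (zshell k)) (map (gmul (a, - b)) (zshell k))).
  - rewrite filter_gdvd_conj_shell, !zsum_map by auto.
    change (a, - b) with (gconj (a, b)).
    unfold shell_re4. rewrite <- zsum_add, <- (zsum_scale (2 * re4 (a, b))).
    f_equal. apply zsum_ext_in. intros w _. apply re4_gmul_add_conj.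
  - apply zshell_NoDup.
  - now apply gmul_zshell_NoDup.
  - now apply gmul_zshell_NoDup.
  - intros z. rewrite in_gmul_zshell, in_zshell, Hab by nia. tauto.
  - intros z. rewrite in_gmul_zshell, in_zshell, norm2_conj by nia. tauto.
  - intros [x y]. rewrite in_zshell, in_gmul_zshell, norm2_conj by nia.
    intros HN Hd. split; auto.
    destruct (split_gdvd_cases x y k HN) as [H|H]; congruence.
Qed.

Lemma split_not_dvd_re4 : ~ (p | 2 * re4 (a, b)).
Proof.
  unfold norm2 in Hab; simpl in Hab.
  intros H. assert (H16 : (p | 2 * (2 * (2 * (2 * (a * (a * (a * a)))))))).
  { replace (2 * (2 * (2 * (2 * (a * (a * (a * a)))))))
      with (2 * re4 (a, b) - p * (2 * (b * b - 7 * a * a)))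
      by (rewrite <- Hab; cbv [re4]; ring).
    apply Z.divide_sub_r; auto. apply Z.divide_mul_l, Z.divide_refl. }
  pose proof split_not_dvd_a. pose proof (odd_prime_not_dvd_2 p Hp Hp2).
  repeat (apply prime_mult in H16; auto; destruct H16 as [H16|H16]; [tauto|]). tauto.
Qed.

(* The Hecke recursion [c_(e+2) = 2 re4(a,b) c_(e+1) - p^4 c_e] never produces a
   multiple of [p], because [p] does not divide [2 re4(a,b)]. *)
Lemma shell_re4_split_pow n : ~ (p | n) -> 0 <= n -> forall e,
  exists c, ~ (p | c) /\ shell_re4 (p ^ Z.of_nat e * n) = c * shell_re4 n.
Proof.
  intros Hn Hn0.
  assert (Hpair : forall e, exists c c', ~ (p | c) /\ ~ (p | c') /\
      shell_re4 (p ^ Z.of_nat e * n) = c * shell_re4 n /\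
      shell_re4 (p ^ Z.of_nat (S e) * n) = c' * shell_re4 n).
  { induction e as [|e [c [c' [Hc [Hc' [IH IH']]]]]].
    - exists 1, (2 * re4 (a, b)). repeat split.
      + intros H1. apply Z.divide_1_r in H1. lia.
      + apply split_not_dvd_re4.
      + now rewrite Z.pow_0_r, !Z.mul_1_l.
      + simpl Z.of_nat. rewrite Z.pow_1_r, shell_re4_split by auto.
        destruct (Z.eqb_spec (n mod p) 0) as [E|E]; [|ring].
        exfalso. apply Hn, Z.mod_divide; auto. lia.
    - exists c', (2 * re4 (a, b) * c' - p ^ 4 * c). repeat split; auto.
      + intros H. apply Hc'. apply (prime_dvd_cancel p (2 * re4 (a, b))); auto.
        apply split_not_dvd_re4.
        replace (2 * re4 (a, b) * c') with
          ((2 * re4 (a, b) * c' - p ^ 4 * c) + p * (p ^ 3 * c)) by ring.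
        apply Z.divide_add_r; auto. apply Z.divide_factor_l.
      + assert (Epow : forall j, p ^ Z.of_nat (S j) * n = p * (p ^ Z.of_nat j * n)).
        { intros j. rewrite Nat2Z.inj_succ, Z.pow_succ_r by lia. ring. }
        assert (Hpos : 0 <= p ^ Z.of_nat (S e) * n)
          by (apply Z.mul_nonneg_nonneg; auto; apply Z.pow_nonneg; lia).
        rewrite Epow, shell_re4_split, IH' by auto.
        rewrite (Epow e), (Z.mul_comm p), Z.mod_mul, Z.div_mul, IH by lia.
        simpl. ring. }
  intros e. destruct (Hpair e) as [c [_ [Hc [_ [E _]]]]]. now exists c.
Qed.

Lemma is_sum2sq_split_div k : 0 <= k -> is_sum2sq (p * k) -> is_sum2sq k.
Proof.
  intros Hk [x [y HN]].
  destruct (split_gdvd_cases x y k HN) as [Hd|Hd].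
  - refine (is_sum2sq_gdvd (a, b) k (x, y) _ Hk _ Hd); rewrite Hab; auto; lia.
  - refine (is_sum2sq_gdvd (a, - b) k (x, y) _ Hk _ Hd); rewrite norm2_conj; auto; lia.
Qed.

Lemma is_sum2sq_split_pow_div e k : 0 <= k ->
  is_sum2sq (p ^ Z.of_nat e * k) -> is_sum2sq k.
Proof.
  intros Hk. induction e as [|e IH]; intros H.
  - now rewrite Z.pow_0_r, Z.mul_1_l in H.
  - apply IH, is_sum2sq_split_div.
    + apply Z.mul_nonneg_nonneg; auto. apply Z.pow_nonneg; lia.
    + rewrite Nat2Z.inj_succ, Z.pow_succ_r, <- Z.mul_assoc in H by lia. exact H.
Qed.

End SplitPrime.

(** * Primes that stay inert *)

Lemma centered_rem k x : 0 < k -> exists d, - k <= 2 * (x - k * d) < k.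
Proof.
  intros Hk. exists ((2 * x + k) / (2 * k)).
  pose proof (Z.div_mod (2 * x + k) (2 * k) ltac:(lia)).
  pose proof (Z.mod_pos_bound (2 * x + k) (2 * k) ltac:(lia)). lia.
Qed.

(* Fermat's descent: from [x^2 + y^2 = k p] with [1 < k < p], reducing [x, y] modulo
   [k] and dividing the product [(x + iy)(u - iv)] by [k] gives such a relation with
   a smaller multiplier [r <= k/2]. *)
Lemma prime_sum2sq_descent p : prime p -> forall k x y, 0 < k < p ->
  x * x + y * y = k * p -> is_sum2sq p.
Proof.
  intros Hp k. induction k as [k IH] using (well_founded_ind (Z.lt_wf 0)).
  intros x y Hk H.
  destruct (Z.eq_dec k 1) as [->|Hk1]; [exists x, y; lia|].
  destruct (centered_rem k x) as [d Hd]; [lia|].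
  destruct (centered_rem k y) as [e He]; [lia|].
  set (u := x - k * d) in *. set (v := y - k * e) in *.
  set (r := p - 2 * (x * d + y * e) + k * (d * d + e * e)).
  assert (Hr : u * u + v * v = k * r).
  { subst u v r.
    transitivity ((x*x+y*y) - 2*k*(x*d+y*e) + k*k*(d*d+e*e)); [ring|].
    rewrite H. ring. }
  assert (Hu : 4 * (u * u) <= k * k) by nia.
  assert (Hv : 4 * (v * v) <= k * k) by nia.
  assert (Hr2 : k * (2 * r) <= k * k) by lia.
  apply Z.mul_le_mono_pos_l in Hr2; [|lia].
  assert (Hr0 : 0 <= r).
  { assert (0 <= k * r) by nia. apply Z.mul_nonneg_cancel_l in H0; lia. }
  destruct (Z.eq_dec r 0) as [E|E].
  - exfalso. rewrite E in Hr.
    assert (x = k * d) by nia. assert (y = k * e) by nia. subst x y.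
    assert (Hkp : (k | p)).
    { exists (d * d + e * e). apply (Z.mul_reg_l _ _ k); [lia|]. rewrite <- H. ring. }
    apply prime_divisors in Hkp; auto. lia.
  - apply (IH r ltac:(lia) (p - x * d - y * e) (x * e - y * d)); [lia|].
    transitivity (p*p - 2*p*(x*d+y*e) + (x*x+y*y)*(d*d+e*e)); [ring|].
    rewrite H. subst r. ring.
Qed.

Lemma prime_sum2sq_of_dvd p x y : prime p -> (p | x * x + y * y) -> ~ (p | x) ->
  is_sum2sq p.
Proof.
  intros Hp [m Hm] Hx. pose proof (prime_ge_2 p Hp).
  destruct (centered_rem p x) as [d Hd]; [lia|].
  destruct (centered_rem p y) as [e He]; [lia|].
  set (k := m - 2 * (x * d + y * e) + p * (d * d + e * e)).
  set (u := x - p * d) in *. set (v := y - p * e) in *.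
  assert (Hk : u * u + v * v = k * p).
  { subst u v k.
    transitivity ((x*x+y*y) - 2*p*(x*d+y*e) + p*p*(d*d+e*e)); [ring|].
    rewrite Hm. ring. }
  assert (Hu : 4 * (u * u) <= p * p) by nia.
  assert (Hv : 4 * (v * v) <= p * p) by nia.
  assert (Hk0 : 0 < k).
  { assert (0 <= k) by (apply (Z.mul_nonneg_cancel_r _ p); nia).
    destruct (Z.eq_dec k 0) as [E|E]; [|lia].
    exfalso. rewrite E in Hk. apply Hx. exists d. subst u. nia. }
  assert (Hk1 : p * (2 * k) <= p * p) by lia.
  apply Z.mul_le_mono_pos_l in Hk1; [|lia].
  apply (prime_sum2sq_descent p Hp k u v); auto. lia.
Qed.

Lemma inert_prime_dvd p x y : prime p -> ~ is_sum2sq p ->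
  (p | x * x + y * y) -> (p | x) /\ (p | y).
Proof.
  intros Hp Hns Hd.
  assert (Hx : (p | x)).
  { destruct (Znumtheory.Zdivide_dec p x) as [H|H]; auto.
    exfalso. eauto using prime_sum2sq_of_dvd. }
  split; auto.
  assert (Hyy : (p | y * y)).
  { replace (y * y) with ((x * x + y * y) - x * x) by ring.
    apply Z.divide_sub_r; auto. now apply Z.divide_mul_l. }
  apply prime_mult in Hyy; tauto.
Qed.

(** * Non-vanishing of [shell_re4] *)

Lemma exists_prime_divisor m : 1 < m -> exists p, prime p /\ (p | m).
Proof.
  induction m as [m IH] using (well_founded_ind (Z.lt_wf 0)). intros Hm.
  destruct (prime_dec m) as [H|H]; [exists m; split; auto; apply Z.divide_refl|].
  destruct (not_prime_divide m Hm H) as [n [Hn Hd]].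
  destruct (IH n ltac:(lia) ltac:(lia)) as [p [Hp Hpn]].
  exists p; split; auto. eapply Z.divide_trans; eauto.
Qed.

Lemma prime_power_factor p m : 1 < p -> 0 < m ->
  exists e n, m = p ^ Z.of_nat e * n /\ ~ (p | n) /\ 0 < n.
Proof.
  intros Hp. induction m as [m IH] using (well_founded_ind (Z.lt_wf 0)). intros Hm.
  destruct (Znumtheory.Zdivide_dec p m) as [[c Hc]|H].
  - destruct (IH c ltac:(nia) ltac:(nia)) as [e [n [E [H1 H2]]]].
    exists (S e), n. split; auto.
    rewrite Nat2Z.inj_succ, Z.pow_succ_r by lia. rewrite Hc, E; ring.
  - exists O, m. split; [rewrite Z.pow_0_r; ring|]. auto.
Qed.

Lemma gdvdb_1i x y k : x * x + y * y = 2 * k -> gdvdb (1, 1) (x, y) = true.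
Proof.
  intros H. apply gdvdbP; [reflexivity|]. unfold norm2; simpl.
  destruct (Z.Even_or_Odd x) as [[q Hq]|[q Hq]];
    destruct (Z.Even_or_Odd y) as [[r Hr]|[r Hr]]; subst; try (exfalso; nia).
  - split; [exists (q + r)|exists (r - q)]; ring.
  - split; [exists (q + r + 1)|exists (r - q)]; ring.
Qed.

Lemma shell_re4_reduce_two m : 0 < m -> (2 | m) -> is_sum2sq m ->
  exists m', 0 < m' < m /\ is_sum2sq m' /\ shell_re4 m = -4 * shell_re4 m'.
Proof.
  intros Hm [c ->] [x [y Hxy]]. exists c. repeat split; try lia.
  - apply (is_sum2sq_gdvd (1, 1) c (x, y)); try reflexivity; try lia.
    + unfold norm2; cbn [fst snd]. lia.
    + apply (gdvdb_1i x y c). lia.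
  - replace (c * 2) with (norm2 (1, 1) * c) by (unfold norm2; cbn [fst snd]; ring).
    apply shell_re4_gmul; try reflexivity; try lia.
    intros [u v] Huv. apply (gdvdb_1i u v c). unfold norm2 in Huv; cbn [fst snd] in Huv. lia.
Qed.

Lemma shell_re4_reduce_inert p m : prime p -> ~ is_sum2sq p -> (p | m) -> 0 < m ->
  is_sum2sq m ->
  exists m', 0 < m' < m /\ is_sum2sq m' /\ shell_re4 m = p ^ 4 * shell_re4 m'.
Proof.
  intros Hp Hns Hpm Hm [x [y Hxy]]. pose proof (prime_ge_2 p Hp).
  destruct (inert_prime_dvd p x y Hp Hns) as [[u ->] [v ->]]; [now rewrite Hxy|].
  assert (Em : m = p * p * (u * u + v * v)) by (rewrite <- Hxy; ring).
  assert (Hs : 0 < u * u + v * v).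
  { destruct (Z.eq_dec (u * u + v * v) 0) as [E|E]; [rewrite E in Em; lia|nia]. }
  assert (Hpp : 4 <= p * p) by nia.
  exists (u * u + v * v). repeat split; [lia|rewrite Em; nia|now exists u, v|].
  replace m with (norm2 (p, 0) * (u * u + v * v)) by (unfold norm2; cbn [fst snd]; lia).
  replace (p ^ 4) with (re4 (p, 0)) by (cbv [re4]; ring).
  apply shell_re4_gmul.
  - unfold norm2; cbn [fst snd]; lia.
  - lia.
  - cbv [im4]; ring.
  - intros [x y] Hxy'. apply gdvdb_scalar; [lia|].
    apply (inert_prime_dvd p x y Hp Hns). exists (p * (u * u + v * v)).
    unfold norm2 in Hxy'; cbn [fst snd] in Hxy'. lia.
Qed.

Lemma shell_re4_reduce_split p m : prime p -> p <> 2 -> is_sum2sq p -> (p | m) ->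
  0 < m -> is_sum2sq m ->
  exists c m', c <> 0 /\ 0 < m' < m /\ is_sum2sq m' /\ shell_re4 m = c * shell_re4 m'.
Proof.
  intros Hp Hp2 [a [b Hab]] Hpm Hm Hsq. pose proof (prime_ge_2 p Hp).
  destruct (prime_power_factor p m ltac:(lia) Hm) as [e [n [E [Hn Hn0]]]].
  destruct (shell_re4_split_pow p a b Hp Hp2 Hab n Hn ltac:(lia) e) as [c [Hc Hcn]].
  exists c, n. repeat split; auto.
  - intros ->. apply Hc, Z.divide_0_r.
  - destruct e as [|e].
    + exfalso. apply Hn. rewrite Z.pow_0_r, Z.mul_1_l in E. now subst.
    + rewrite Nat2Z.inj_succ, Z.pow_succ_r in E by lia.
      assert (0 < p ^ Z.of_nat e) by (apply Z.pow_pos_nonneg; lia).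
      assert (2 <= p * p ^ Z.of_nat e) by nia.
      rewrite E. nia.
  - apply (is_sum2sq_split_pow_div p a b Hp Hp2 Hab e); [lia|]. now rewrite <- E.
  - now rewrite E.
Qed.

Lemma shell_re4_reduce m : 1 < m -> is_sum2sq m ->
  exists c m', c <> 0 /\ 0 < m' < m /\ is_sum2sq m' /\ shell_re4 m = c * shell_re4 m'.
Proof.
  intros Hm Hsq. destruct (exists_prime_divisor m Hm) as [p [Hp Hpm]].
  destruct (Z.eq_dec p 2) as [->|Hp2].
  - destruct (shell_re4_reduce_two m) as [m' H]; auto; [lia|].
    exists (-4), m'. split; [lia|exact H].
  - destruct (classic (is_sum2sq p)) as [Hs|Hns].
    + apply (shell_re4_reduce_split p); auto; lia.
    + destruct (shell_re4_reduce_inert p m) as [m' H]; auto; [lia|].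
      exists (p ^ 4), m'. split; [|exact H].
      apply Z.pow_nonzero; [apply prime_ge_2 in Hp; lia|lia].
Qed.

Lemma shell_re4_neq0 m : 0 < m -> is_sum2sq m -> shell_re4 m <> 0.
Proof.
  induction m as [m IH] using (well_founded_ind (Z.lt_wf 0)). intros Hm Hsq.
  destruct (Z.eq_dec m 1) as [->|Hm1]; [rewrite shell_re4_1; lia|].
  destruct (shell_re4_reduce m ltac:(lia) Hsq) as [c [m' [Hc [Hm' [Hsq' ->]]]]].
  apply Z.neq_mul_0. split; auto. apply IH; auto; lia.
Qed.

(** * The circle average *)

Close Scope Z_scope.
Open Scope R_scope.

Definition re4R (x y : R) : R := x ^ 4 - 6 * x ^ 2 * y ^ 2 + y ^ 4.

Lemma re4R_poly : poly2_deg_le 4 re4R.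
Proof.
  exists [(1, 4%nat, 0%nat); (-6, 2%nat, 2%nat); (1, 0%nat, 4%nat)]. split.
  - repeat constructor; simpl; lia.
  - intros x y. unfold re4R. simpl. ring.
Qed.

(* [re4R (cos t) (sin t) = cos (4 t)], whose antiderivative is
   [sin (4 t) / 4 = sin t cos t (cos t ^ 2 - sin t ^ 2)]. *)
Lemma circle_avg_re4R : circle_avg re4R = 0.
Proof.
  set (G t := sin t * cos t * (cos t ^ 2 - sin t ^ 2)).
  assert (H : is_RInt (fun t => re4R (cos t) (sin t)) 0 (2 * PI) (G (2 * PI) - G 0)).
  { apply (is_RInt_derive G).
    - intros t _. unfold G. auto_derive; auto. unfold re4R. ring.
    - intros t _. apply (ex_derive_continuous (K := R_AbsRing) (V := R_NormedModule)).
      unfold re4R. auto_derive. auto. }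
  unfold circle_avg. rewrite (is_RInt_unique _ _ _ _ H).
  unfold G. rewrite sin_2PI, sin_0. field. apply PI_neq0.
Qed.

Lemma IZR_re4 x y : IZR (re4 (x, y)) = re4R (IZR x) (IZR y).
Proof.
  replace (re4 (x, y)) with (x * x * x * x - 6 * (x * x) * (y * y) + y * y * y * y)%Z
    by (cbv [re4]; ring).
  rewrite plus_IZR, minus_IZR, !mult_IZR. unfold re4R. ring.
Qed.

Lemma sum_re4R_scaled r (l : list (Z * Z)) : 0 < r ->
  fold_right (fun p acc => re4R (fst p) (snd p) + acc) 0
    (map (fun p => (fst p / r, snd p / r)) (map (fun p => (IZR (fst p), IZR (snd p))) l))
  = IZR (zsum re4 l) / r ^ 4.
Proof.
  intros Hr. induction l as [|[x y] l IH]; cbn [fold_right map fst snd zsum].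
  - unfold zsum; simpl. field. lra.
  - rewrite IH. change (fold_right _ 0%Z l) with (zsum re4 l).
    rewrite plus_IZR, IZR_re4. unfold re4R. field. lra.
Qed.

Theorem theorem1p1 :
  forall m : nat, (0 < m)%nat ->
    (exists x1 x2 : Z, (x1 * x1 + x2 * x2)%Z = Z.of_nat m) ->
    ~ is_spherical_design_r 4 (sqrt (INR m)) (shell_R m).
Proof.
  intros m Hm Hsq [Hne [_ [_ Havg]]].
  assert (Hr : 0 < sqrt (INR m)) by (apply sqrt_lt_R0, lt_0_INR; lia).
  specialize (Havg re4R re4R_poly).
  rewrite circle_avg_re4R in Havg. unfold list_avg, shell_R in Havg.
  rewrite sum_re4R_scaled in Havg by exact Hr.
  apply (shell_re4_neq0 (Z.of_nat m)); [lia|exact Hsq|].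
  unfold shell_re4, zshell. rewrite Nat2Z.id. apply eq_IZR.
  set (len := INR (length _)) in Havg.
  assert (Hlen : len <> 0).
  { apply not_0_INR. intros E. apply Hne, length_zero_iff_nil, E. }
  apply (f_equal (fun t => t * (len * sqrt (INR m) ^ 4))) in Havg.
  field_simplify in Havg; [exact Havg | split; lra].
Qed.
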